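(* Let $n\ge1$ and $\theta=[p](\tau_1,\dots,\tau_p)\in\Theta_n$. There is an isomorphism of $\Theta_n$-sets $\mathcal J(\theta)\cong\mathcal J'(\theta)$.
   Context: $\Theta_n=\Delta\wr\Theta_{n-1}$ ($\Theta_0$ terminal; $\Delta\wr\mathcal C$ has objects $[p](x_1,\dots,x_p)$ and morphisms given by $f:[p]\to[q]$ in $\Delta$ and morphisms $x_i\to y_j$ for $f(i-1)<j\le f(i)$); $\Theta_n$ is a full subcategory of strict $n$-categories, $N_n$ its nerve. We write $\theta$ also for the representable $\Theta_n[\theta]$. Let $I=[1]([0])$ (the representable $1$-globe) and $J=N_n(J_1)$, the nerve of the free groupoid on one arrow $0\to1$; the inclusion $I\to J$ picks the arrow $0\to1$. $\mathcal J(\theta):=\theta\times I\sqcup_{\theta_0\times I}\theta_0\times J$, where $\theta_0$ is the constant presheaf on the set $\Theta_n[\theta]_{[0]}$ of objects of $\theta$, mapped into $\theta$ in the evident (monomorphic) way. For $0\le i\le p$ let $\theta^i=[p+1](\tau_1,\dots,\tau_i,[0],\tau_{i+1},\dots,\tau_p)$; let $\alpha^i:\theta\to\theta^i$ ($0\le i\le p-1$) have underlying map skipping $i+1$, and $\beta^i:\theta\to\theta^i$ ($1\le i\le p$) underlying map skipping $i$, with identity components on the $\tau_j$ and the unique maps to $[0]$ on the inserted position. Let $\theta^i_J$ be the pushout of $\theta^i\leftarrow I\to J$, where $I\to\theta^i$ is the map with underlying $[1]\to[p+1]$, $0\mapsto i$, $1\mapsto i+1$, and $\varphi^i:\theta^i\to\theta^i_J$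 the induced map. $\mathcal J'(\theta)$ is the colimit of the diagram $\theta^0_J\xleftarrow{\varphi^0\alpha^0}\theta\xrightarrow{\varphi^1\beta^1}\theta^1_J\xleftarrow{\varphi^1\alpha^1}\theta\to\cdots\xleftarrow{\varphi^{p-1}\alpha^{p-1}}\theta\xrightarrow{\varphi^p\beta^p}\theta^p_J$. *)

From mathcomp Require Import all_boot.
From mathcomp Require Import zify.
From Stdlib Require List.
Set Implicit Arguments. Unset Strict Implicit. Unset Printing Implicit Defensive.

(* Obj 0 = the single object of Theta_0 ; Obj (S m) = seq (Obj m):
   the list [:: x_1; ...; x_p] represents [p](x_1, ..., x_p). *)
Fixpoint Obj (n : nat) : Type :=
  match n with 0 => unit | S m => seq (Obj m) end.

Definition zero (n : nat) : Obj n :=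
  match n return Obj n with 0 => tt | S m => [::] end.

Fixpoint Obj_eq_dec (n : nat) : forall x y : Obj n, {x = y} + {x <> y} :=
  match n return forall x y : Obj n, {x = y} + {x <> y} with
  | 0 => fun x y => match x, y with tt, tt => left erefl end
  | S m => fun x y => List.list_eq_dec (@Obj_eq_dec m) x y
  end.

(* i-th entry x_{i+1} (0-indexed) *)
Definition oth n (x : seq (Obj n)) (i : nat) : Obj n := nth (zero n) x i.

(* a map [p] -> [q] of Delta: monotone map 'I_p.+1 -> 'I_q.+1 *)
Definition monotone p q (f : 'I_p.+1 -> 'I_q.+1) : Prop :=
  forall a b : 'I_p.+1, a <= b -> f a <= f b.
Definition fn p q (f : 'I_p.+1 -> 'I_q.+1) (k : nat) : nat := f (inord k).
(* with 0-indexed i, j (paper's i+1, j+1): f(i) < j+1 <= f(i+1) *)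
Definition seg p q (f : 'I_p.+1 -> 'I_q.+1) (i j : nat) : bool :=
  (fn f i <= j) && (j < fn f i.+1).

Fixpoint Hom (n : nat) : Obj n -> Obj n -> Type :=
  match n return Obj n -> Obj n -> Type with
  | 0 => fun _ _ => unit
  | S m => fun (x y : seq (Obj m)) =>
      {f : 'I_(size x).+1 -> 'I_(size y).+1 &
        (monotone f * forall (i : 'I_(size x)) (j : 'I_(size y)),
            seg f i j -> @Hom m (oth x i) (oth y j))%type}
  end.
Arguments Hom : clear implicits.

Definition und m (x y : Obj m.+1) (f : Hom m.+1 x y) :
  'I_(size x).+1 -> 'I_(size y).+1 := projT1 f.
Definition und_mono m (x y : Obj m.+1) (f : Hom m.+1 x y) : monotone (und f) :=
  fst (projT2 f).
Definition cmp m (x y : Obj m.+1) (f : Hom m.+1 x y) :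
  forall (i : 'I_(size x)) (j : 'I_(size y)), seg (und f) i j -> Hom m (oth x i) (oth y j) :=
  snd (projT2 f).

Lemma mono_const p q : monotone (fun _ : 'I_p.+1 => (@ord0 q)).
Proof. by []. Qed.
Lemma mono_id p : monotone (fun k : 'I_p.+1 => k).
Proof. by []. Qed.
Lemma mono_comp p q r (f : 'I_p.+1 -> 'I_q.+1) (g : 'I_q.+1 -> 'I_r.+1) :
  monotone f -> monotone g -> monotone (fun k => g (f k)).
Proof. by move=> hf hg a b h; apply: hg; apply: hf. Qed.

(* Theta_n has a morphism between any two objects (constant at the object 0);
   used only as a default value where no data is required. *)
Fixpoint some_hom (n : nat) : forall x y : Obj n, Hom n x y :=
  match n return forall x y : Obj n, Hom n x y with
  | 0 => fun _ _ => tt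
  | S m => fun (x y : seq (Obj m)) =>
      existT _ (fun _ => ord0) (@mono_const (size x) (size y),
                                fun (i : 'I_(size x)) (j : 'I_(size y)) _ => @some_hom m (oth x i) (oth y j))
  end.

Fixpoint idH (n : nat) : forall x : Obj n, Hom n x x :=
  match n return forall x : Obj n, Hom n x x with
  | 0 => fun _ => tt
  | S m => fun (x : seq (Obj m)) =>
      existT _ (fun k => k) (@mono_id (size x), fun (i j : 'I_(size x)) _ =>
        match @Obj_eq_dec m (oth x i) (oth x j) with
        | left e => eq_rect _ (@Hom m (oth x i)) (@idH m (oth x i)) _ e
        | right _ => @some_hom m (oth x i) (oth x j)
        end)
  end.

(* identity if x = y, otherwise the (here: unique) map to y; used for maps whose
   components are identities or the unique maps to the terminal object [0] *)
Definition dflt n (x y : Obj n) : Hom n x y :=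
  match @Obj_eq_dec n x y with
  | left e => eq_rect x (@Hom n x) (@idH n x) y e
  | right _ => @some_hom n x y
  end.

Definition with_cond (b : bool) (T : Type) (k : b -> T) (d : T) : T :=
  (match b as b' return b = b' -> T with
   | true => fun e => k e | false => fun _ => d end) (erefl b).

(* composition: the component at (i,k) is psi_{j,k} o phi_{i,j} for the unique j
   with f(i) <= j < f(i+1) and g(j) <= k < g(j+1) *)
Fixpoint compH (n : nat) : forall x y z : Obj n, Hom n y z -> Hom n x y -> Hom n x z :=
  match n return forall x y z : Obj n, Hom n y z -> Hom n x y -> Hom n x z with
  | 0 => fun _ _ _ _ _ => tt
  | S m => fun (x y z : Obj m.+1) (g : Hom m.+1 y z) (f : Hom m.+1 x y) =>
      existT _ (fun k => und g (und f k))
        (mono_comp (und_mono f) (und_mono g), fun (i : 'I_(size x)) (k : 'I_(size z)) _ =>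
          match [pick j : 'I_(size y) | seg (und f) i j && seg (und g) j k] with
          | Some j =>
              @with_cond (seg (und f) i j && seg (und g) j k) (Hom m (oth x i) (oth z k))
                (fun e => @compH m _ _ _ (@cmp m y z g j k (proj2 (andb_prop _ _ e)))
                                 (@cmp m x y f i j (proj1 (andb_prop _ _ e))))
                (@some_hom m _ _)
          | None => @some_hom m _ _
          end)
  end.

Record PSh (n : nat) := {
  ob : Obj n -> Type;
  act : forall a b : Obj n, Hom n a b -> ob b -> ob a }.
Arguments ob {n} p a.
Arguments act {n} p {a b} f x.

Definition lawful n (P : PSh n) : Prop :=
  (forall a (x : ob P a), act P (idH a) x = x) /\
  (forall a b c (f : Hom n a b) (g : Hom n b c) (x : ob P c),
      act P (compH g f) x = act P f (act P g x)).

Definition PMap n (P Q : PSh n) := forall a : Obj n, ob P a -> ob Q a.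

Definition natural n (P Q : PSh n) (h : PMap P Q) : Prop :=
  forall a b (f : Hom n a b) (x : ob P b), h a (act P f x) = act Q f (h b x).

Definition is_pushout n (A B C : PSh n) (u : PMap A B) (v : PMap A C)
    (P : PSh n) (i1 : PMap B P) (i2 : PMap C P) : Prop :=
  lawful P /\ natural i1 /\ natural i2 /\
  (forall a x, i1 a (u a x) = i2 a (v a x)) /\
  forall (Z : PSh n) (z1 : PMap B Z) (z2 : PMap C Z),
    lawful Z -> natural z1 -> natural z2 ->
    (forall a x, z1 a (u a x) = z2 a (v a x)) ->
    exists h : PMap P Z, natural h /\
      (forall a x, h a (i1 a x) = z1 a x) /\ (forall a x, h a (i2 a x) = z2 a x) /\
      forall h' : PMap P Z, natural h' ->
        (forall a x, h' a (i1 a x) = z1 a x) -> (forall a x, h' a (i2 a x) = z2 a x) ->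
        forall a x, h' a x = h a x.

(* Q with (c i)_{i<=p} is a colimit of the zigzag
   P 0 <-l 0- X -r 0-> P 1 <-l 1- X -r 1-> ... <-l (p-1)- X -r (p-1)-> P p *)
Definition is_zigzag_colim n (p : nat) (X : PSh n) (P : nat -> PSh n)
    (l : forall i, PMap X (P i)) (r : forall i, PMap X (P i.+1))
    (Q : PSh n) (c : forall i, PMap (P i) Q) : Prop :=
  lawful Q /\ (forall i, i <= p -> natural (c i)) /\
  (forall i, i < p -> forall a x, c i a (l i a x) = c i.+1 a (r i a x)) /\
  forall (Z : PSh n) (z : forall i, PMap (P i) Z),
    lawful Z -> (forall i, i <= p -> natural (z i)) ->
    (forall i, i < p -> forall a x, z i a (l i a x) = z i.+1 a (r i a x)) ->
    exists h : PMap Q Z, natural h /\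
      (forall i, i <= p -> forall a x, h a (c i a x) = z i a x) /\
      forall h' : PMap Q Z, natural h' ->
        (forall i, i <= p -> forall a x, h' a (c i a x) = z i a x) ->
        forall a x, h' a x = h a x.

Definition Yon n (t : Obj n) : PSh n :=
  {| ob := fun a => Hom n a t; act := fun a b f g => compH g f |}.
Definition Ymap n (t t' : Obj n) (u : Hom n t t') : PMap (Yon t) (Yon t') :=
  fun a g => compH u g.
Definition prodP n (P Q : PSh n) : PSh n :=
  {| ob := fun a => (ob P a * ob Q a)%type;
     act := fun a b f x => (act P f x.1, act Q f x.2) |}.
(* theta_0 : constant presheaf on the set Theta_n[theta]_[0] of objects of theta *)
Definition constP n (t : Obj n) : PSh n :=
  {| ob := fun _ => Hom n (zero n) t; act := fun _ _ _ x => x |}.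
Definition incl0 n (t : Obj n) : PMap (constP t) (Yon t) :=
  fun a x => compH x (some_hom a (zero n)).

Definition globe m : Obj m.+1 := [:: zero m].
(* J = N(J_1): a theta-cell of the nerve of the contractible groupoid J_1 on {0,1}
   is just an assignment of objects {0..p} -> {0,1} *)
Definition JP m : PSh m.+1 :=
  {| ob := fun a : Obj m.+1 => 'I_(size a).+1 -> bool;
     act := fun a b f o => fun k => o (und f k) |}.
(* I -> J picks the arrow 0 -> 1 *)
Definition iJ m : PMap (Yon (globe m)) (JP m) :=
  fun a u k => nat_of_ord (und u k) == 1.

Definition mkUnd p q (F : nat -> nat) : 'I_p.+1 -> 'I_q.+1 :=
  fun k => inord (minn (F k) q).
Arguments mkUnd : clear implicits.
Lemma mkUnd_mono p q F : (forall a b, a <= b -> F a <= F b) -> monotone (mkUnd p q F).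
Proof.
move=> hF a b hab; rewrite /mkUnd !inordK ?ltnS ?geq_minr //.
have := hF _ _ hab; lia.
Qed.

(* theta^i = [p+1](tau_1..tau_i,[0],tau_{i+1}..tau_p) *)
Definition thi m (t : Obj m.+1) (i : nat) : Obj m.+1 :=
  take i t ++ zero m :: drop i t.

Definition skipF (s k : nat) : nat := if k < s then k else k.+1.
Lemma skipF_mono s a b : a <= b -> skipF s a <= skipF s b.
Proof. rewrite /skipF; case: ifP; case: ifP; lia. Qed.

(* theta -> theta^i with underlying coface map skipping s, identity components
   on the tau_j and the unique maps to the inserted [0] *)
Definition ins_map m (t : Obj m.+1) (i s : nat) : Hom m.+1 t (thi t i) :=
  existT _ (mkUnd (size t) (size (thi t i)) (skipF s))
    (@mkUnd_mono (size t) (size (thi t i)) (skipF s) (@skipF_mono s), fun (l : 'I_(size t)) (j : 'I_(size (thi t i))) _ => dflt (oth t l) (oth (thi t i) j)).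

Definition alpha m (t : Obj m.+1) (i : nat) := ins_map t i i.+1.
Definition beta m (t : Obj m.+1) (i : nat) := ins_map t i i.

Lemma shift_mono i a b : a <= b -> i + a <= i + b.
Proof. lia. Qed.
Definition uI m (t : Obj m.+1) (i : nat) : Hom m.+1 (globe m) (thi t i) :=
  existT _ (mkUnd 1 (size (thi t i)) (fun k => i + k))
    (@mkUnd_mono 1 (size (thi t i)) (fun k => i + k) (@shift_mono i),
     fun (l : 'I_1) (j : 'I_(size (thi t i))) _ => dflt (oth (globe m) l) (oth (thi t i) j)).

(* the span theta x I <- theta_0 x I -> theta_0 x J defining calJ(theta) *)
Definition span_u m (t : Obj m.+1) :
  PMap (prodP (constP t) (Yon (globe m))) (prodP (Yon t) (Yon (globe m))) :=
  fun a x => (@incl0 m.+1 t a x.1, x.2).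
Definition span_v m (t : Obj m.+1) :
  PMap (prodP (constP t) (Yon (globe m))) (prodP (constP t) (JP m)) :=
  fun a x => (x.1, @iJ m a x.2).

Arguments Yon {n} t.
Arguments Ymap {n t t'} u.
Arguments prodP {n} P Q.
Arguments constP {n} t.
Arguments globe : clear implicits.
Arguments JP : clear implicits.
Arguments iJ : clear implicits.
Arguments thi {m} t i.
Arguments alpha {m} t i.
Arguments beta {m} t i.
Arguments uI {m} t i.
Arguments span_u {m} t.
Arguments span_v {m} t.
Arguments compH {n x y z} g f.
Arguments natural {n P Q} h.
Arguments lawful {n} P.

(* A cell (x, u) of theta x I over a splits a into the part lying over 0 and
   the part lying over 1, and x sends the first to vertices <= i and the second
   to vertices >= i for all i in a nonempty interval (it contains
   [split_index x u]).  For each such i, (x, u) lifts to the cell [lift i x u]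
   of theta^i whose inserted edge lies over the arrow of I; the lifts for i and
   i+1 are the images of x under alpha^i and beta^(i+1), so they agree in
   J'(theta).  Together with "vertex i of theta_0 x J goes to the J of
   theta^i_J" this gives J(theta) -> J'(theta).  Conversely theta^i_J ->
   J(theta) is induced by (sigma^i, tau^i) : theta^i -> theta x I, sigma^i
   collapsing the inserted edge, and by the vertex i on J.  Both composites fix
   the generators, hence are identities by the uniqueness in the universal
   properties. *)

From mathcomp Require Import all_boot.
From mathcomp Require Import zify.
From Stdlib Require Import FunctionalExtensionality ProofIrrelevance Eqdep_dec ClassicalEpsilon.
Set Implicit Arguments. Unset Strict Implicit. Unset Printing Implicit Defensive.

(** * The category Theta_(m+1) *)

Lemma with_cond_true (b : bool) T (k : b -> T) d (e : b) : with_cond k d = k e.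
Proof.
case: b k e => // k e; rewrite /with_cond /=.
by rewrite (eq_irrelevance e (erefl true)).
Qed.

Lemma Obj_eq_dec_refl n (x : Obj n) : Obj_eq_dec x x = left erefl.
Proof.
case: (Obj_eq_dec x x) => [e|ne]; last by case: ne.
by rewrite (UIP_dec (@Obj_eq_dec n) e erefl).
Qed.

Lemma dflt_id n (x : Obj n) : dflt x x = idH x.
Proof. by rewrite /dflt Obj_eq_dec_refl. Qed.

Section Components.
Variable m : nat.
Implicit Types x y z : Obj m.+1.

(* [cmp] indexed by plain naturals; the junk value [some_hom] is returned
   outside the segments of the underlying map. *)
Definition component x y (f : Hom m.+1 x y) (i j : nat) : Hom m (oth x i) (oth y j) :=
  @with_cond ((i < size x) && (j < size y) && seg (und f) i j) (Hom m (oth x i) (oth y j))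
    (fun e => @cmp m x y f (Ordinal (proj1 (andP (proj1 (andP e)))))
                           (Ordinal (proj2 (andP (proj1 (andP e))))) (proj2 (andP e)))
    (some_hom _ _).

Lemma componentE x y (f : Hom m.+1 x y) (i : 'I_(size x)) (j : 'I_(size y))
    (h : seg (und f) i j) :
  component f i j = cmp h.
Proof.
have e : (i < size x) && (j < size y) && seg (und f) i j by rewrite !ltn_ord h.
rewrite /component (with_cond_true _ _ e).
case: i h e => i hi h e; case: j h e => j hj h e /=.
move: (proj1 (andP (proj1 (andP e)))) (proj2 (andP (proj1 (andP e)))) (proj2 (andP e)).
by move=> a b c; rewrite (eq_irrelevance a hi) (eq_irrelevance b hj) (eq_irrelevance c h).
Qed.

Lemma fnE p q (f : 'I_p.+1 -> 'I_q.+1) (k : 'I_p.+1) : fn f k = f k.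
Proof. by rewrite /fn inord_val. Qed.

Lemma fn_leq p q (f : 'I_p.+1 -> 'I_q.+1) k : fn f k <= q.
Proof. by rewrite /fn -ltnS. Qed.

Lemma fn_homo x y (f : Hom m.+1 x y) a b :
  a <= b -> b <= size x -> fn (und f) a <= fn (und f) b.
Proof. by move=> hab hb; apply: und_mono; rewrite !inordK //; lia. Qed.

Lemma fn_comp x y z (f : Hom m.+1 x y) (g : Hom m.+1 y z) k :
  fn (und (compH g f)) k = fn (und g) (fn (und f) k).
Proof. by rewrite /fn /= inord_val. Qed.

Lemma Hom_ext x y (f g : Hom m.+1 x y) :
  (forall k, k <= size x -> fn (und f) k = fn (und g) k) ->
  (forall i j, i < size x -> j < size y -> seg (und f) i j -> component f i j = component g i j) ->
  f = g.
Proof.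
case: f => F [mF cF]; case: g => G [mG cG] hfn hc.
have eFG : F = G.
  apply: functional_extensionality => k; apply: val_inj => /=.
  by have := hfn k (ltn_ord k); rewrite !fnE.
subst G; rewrite (proof_irrelevance _ mF mG); do 2 f_equal.
apply: functional_extensionality_dep => i; apply: functional_extensionality_dep => j.
apply: functional_extensionality_dep => h.
have := hc i j (ltn_ord i) (ltn_ord j) h.
by rewrite (@componentE x y (existT _ F (mF, cF)) i j h) (@componentE x y (existT _ F (mG, cG)) i j h).
Qed.

Lemma seg_ltn x y (f : Hom m.+1 x y) i j : seg (und f) i j -> j < size y.
Proof. by case/andP=> _ h; have := fn_leq (und f) i.+1; lia. Qed.

Lemma seg_comp x y z (f : Hom m.+1 x y) (g : Hom m.+1 y z) i j k :
  i < size x -> seg (und f) i j -> seg (und g) j k -> seg (und (compH g f)) i k.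
Proof.
move=> hi hf hg; have hj := seg_ltn hf; move: hf hg.
rewrite /seg !fn_comp => /andP[a1 a2] /andP[b1 b2].
have := fn_homo g a1 (ltnW hj); have := fn_homo g a2 (fn_leq _ _).
by move=> *; apply/andP; split; lia.
Qed.

Lemma seg_uniq x y z (f : Hom m.+1 x y) (g : Hom m.+1 y z) i j j' k :
  seg (und f) i j -> seg (und f) i j' -> seg (und g) j k -> seg (und g) j' k -> j = j'.
Proof.
move=> h1 h2 + + ; have l1 := seg_ltn h1; have l2 := seg_ltn h2.
rewrite /seg => /andP[a1 a2] /andP[b1 b2].
case: (ltngtP j j') => // hjj.
- by have := fn_homo g hjj (ltnW l2); lia.
- by have := fn_homo g hjj (ltnW l1); lia.
Qed.

Lemma component_comp x y z (f : Hom m.+1 x y) (g : Hom m.+1 y z) i j k :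
  i < size x -> k < size z -> seg (und f) i j -> seg (und g) j k ->
  component (compH g f) i k = compH (component g j k) (component f i j).
Proof.
move=> hi hk.
have [i' -> ] : exists i' : 'I_(size x), i = i' by exists (Ordinal hi).
have [k' -> ] : exists k' : 'I_(size z), k = k' by exists (Ordinal hk).
move=> hf hg; have hj := seg_ltn hf.
rewrite (componentE (seg_comp (ltn_ord i') hf hg)) /cmp /=.
case: pickP => [j' /andP[h1 h2] | hn]; last by have := hn (Ordinal hj); rewrite /= hf hg.
have ej : j = j' by apply: (seg_uniq hf h1 hg h2).
subst j; have e : seg (und f) i' j' && seg (und g) j' k' by rewrite h1 h2.
rewrite (with_cond_true _ _ e) (componentE h1) (componentE h2).
by congr compH; congr cmp; apply: eq_irrelevance.
Qed.

Lemma nat_bracket (G : nat -> nat) a b k :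
  (forall u v, a <= u -> u <= v -> v <= b -> G u <= G v) -> a <= b ->
  G a <= k < G b -> exists2 j, a <= j < b & G j <= k < G j.+1.
Proof.
elim: b => [|b IH] hG hab0 /andP[h1 h2].
  by move: hab0; rewrite leqn0 => /eqP e; subst a; lia.
have hab : a <= b.
  by case: (leqP a b) => // hab; have e : a = b.+1; [lia | subst a; lia].
case: (leqP (G b) k) => hb; first by exists b => //; apply/andP; split.
have [j /andP[j1 j2] hj] := IH (fun u v h1 h2 h3 => hG u v h1 h2 (leqW h3)) hab (introT andP (conj h1 hb)).
by exists j => //; apply/andP; split => //; lia.
Qed.

Lemma seg_compP x y z (f : Hom m.+1 x y) (g : Hom m.+1 y z) i k :
  i < size x -> seg (und (compH g f)) i k -> exists2 j, seg (und f) i j & seg (und g) j k.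
Proof.
move=> hi; rewrite /seg !fn_comp => hs.
have [||j /andP[j1 j2] hj] := nat_bracket _ _ hs.
- by move=> u v _ h2 h3; apply: fn_homo => //; have := fn_leq (und f) i.+1; lia.
- exact: fn_homo.
by exists j; rewrite /seg ?j1 ?j2.
Qed.

Lemma fn_id y k : k <= size y -> fn (und (idH y)) k = k.
Proof. by move=> h; rewrite /fn /= inordK. Qed.

Lemma seg_id y k : k < size y -> seg (und (idH y)) k k.
Proof. by move=> h; rewrite /seg !fn_id //; lia. Qed.

Lemma component_id y k : k < size y -> component (idH y) k k = idH (oth y k).
Proof.
move=> h; rewrite (@componentE _ _ _ (Ordinal h) (Ordinal h) (seg_id h)).
by rewrite /cmp /= Obj_eq_dec_refl.
Qed.

End Components.

Lemma hom_into_zero n (x y : Obj n) : y = zero n -> forall f g : Hom n x y, f = g.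
Proof.
move=> -> {y}; case: n x => [|m] x f g; first by case: f; case: g.
apply: Hom_ext => [k hk|//].
by have := fn_leq (und f) k; have := fn_leq (und g) k; rewrite /=; lia.
Qed.

Lemma compH_idl n (x y : Obj n) (f : Hom n x y) : compH (idH y) f = f.
Proof.
elim: n x y f => [|m IH] x y f; first by case: f.
have hf k : k <= size x -> fn (und (compH (idH y) f)) k = fn (und f) k.
  by move=> hk; rewrite fn_comp fn_id // fn_leq.
apply: Hom_ext => // i j hi hj hs.
have hs' : seg (und f) i j by move: hs; rewrite /seg (hf i (ltnW hi)) (hf i.+1 hi).
by rewrite (component_comp hi hj hs' (seg_id hj)) component_id // IH.
Qed.

Lemma compHA n (x y z w : Obj n) (f : Hom n x y) (g : Hom n y z) (h : Hom n z w) :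
  compH h (compH g f) = compH (compH h g) f.
Proof.
elim: n x y z w f g h => [|m IH] x y z w f g h; first by [].
apply: Hom_ext => [k hk|i l hi hl hs]; first by rewrite !fn_comp.
have [k h1 h2] := seg_compP hi hs.
have [j h3 h4] := seg_compP hi h1.
have hj := seg_ltn h3; have hk := seg_ltn h4.
rewrite (component_comp hi hl h1 h2) (component_comp hi hk h3 h4).
by rewrite (component_comp hi hl h3 (seg_comp hj h4 h2)) (component_comp hj hl h4 h2) IH.
Qed.

Lemma dflt_comp_inv n (B C : Obj n) : B = C -> compH (dflt C B) (dflt B C) = idH B.
Proof. by move=> <-; rewrite dflt_id compH_idl. Qed.

Lemma dflt_cancel n (A B C : Obj n) (g : Hom n A B) :
  B = C -> compH (dflt C B) (compH (dflt B C) g) = g.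
Proof. by move=> e; rewrite compHA dflt_comp_inv // compH_idl. Qed.

(** * Codegeneracies and the objects theta^i *)

Definition sigF (i k : nat) := if k <= i then k else k.-1.
Lemma sigF_mono i a b : a <= b -> sigF i a <= sigF i b.
Proof. by rewrite /sigF; do 2 case: ifP; lia. Qed.

Definition tauF (i k : nat) := if k <= i then 0 else 1.
Lemma tauF_mono i a b : a <= b -> tauF i a <= tauF i b.
Proof. by rewrite /tauF; do 2 case: ifP; lia. Qed.

Ltac case_lia := unfold seg, sigF, tauF, skipF in *;
  repeat match goal with H : is_true (_ && _) |- _ => case/andP: H => ? ? end;
  try (apply/andP; split);
  repeat match goal with
   | |- context [if ?b then _ else _] => destruct b eqn:?
   | H : context [if ?b then _ else _] |- _ => destruct b eqn:?
  end; lia.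

Section ExplicitMaps.
Variable m : nat.

Definition mkH (x y : Obj m.+1) (F : nat -> nat) (HF : forall a b, a <= b -> F a <= F b)
  (C : forall i j : nat, Hom m (oth x i) (oth y j)) : Hom m.+1 x y :=
  existT _ (mkUnd (size x) (size y) F)
    (@mkUnd_mono (size x) (size y) F HF, fun (i : 'I_(size x)) (j : 'I_(size y)) _ => C i j).

Lemma fn_mkH x y F HF C k :
  k <= size x -> fn (und (@mkH x y F HF C)) k = minn (F k) (size y).
Proof. by move=> hk; rewrite /fn /= /mkUnd !inordK //; lia. Qed.

Lemma component_mkH x y F HF C i j : i < size x -> j < size y ->
  seg (und (@mkH x y F HF C)) i j -> component (@mkH x y F HF C) i j = C i j.
Proof. by move=> hi hj hs; rewrite (@componentE _ _ _ _ (Ordinal hi) (Ordinal hj) hs). Qed.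

Lemma size_thi (t : Obj m.+1) i : size (thi t i) = (size t).+1.
Proof. by rewrite /thi size_cat /= size_take size_drop; case: ltnP; lia. Qed.

Lemma oth_thi (t : Obj m.+1) i l : i <= size t ->
  oth (thi t i) l = if l < i then oth t l else if l == i then zero m else oth t l.-1.
Proof.
move=> hi; rewrite /oth /thi nth_cat size_take.
have -> : (if i < size t then i else size t) = i by case: ltnP; lia.
case: ltnP => h1; first exact: nth_take.
case: eqP => [->|h2]; first by rewrite subnn.
have -> : l - i = (l - i).-1.+1 by lia.
by rewrite /= nth_drop; congr nth; lia.
Qed.

Lemma oth_thi_new (t : Obj m.+1) i : i <= size t -> oth (thi t i) i = zero m.
Proof. by move=> hi; rewrite oth_thi // ltnn eqxx. Qed.

Lemma oth_thi_old (t : Obj m.+1) i l :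
  i <= size t -> l != i -> oth (thi t i) l = oth t (sigF i l).
Proof.
move=> hi /negbTE hl; rewrite oth_thi // hl /sigF.
by case: ltnP => h; [rewrite ifT //; lia | rewrite ifF //; move/negbT: hl; lia].
Qed.

Lemma oth_globe l : oth (globe m) l = zero m.
Proof. by case: l => //= l; rewrite /oth /= nth_nil. Qed.

Lemma fn_globe a (u : Hom m.+1 a (globe m)) k : fn (und u) k <= 1.
Proof. exact: fn_leq. Qed.

Lemma globe_hom_ext a (f g : Hom m.+1 a (globe m)) :
  (forall k, k <= size a -> fn (und f) k = fn (und g) k) -> f = g.
Proof. by move=> h; apply: Hom_ext => // i j _ _ _; apply: hom_into_zero; exact: oth_globe. Qed.

End ExplicitMaps.

(** * Lifting cells of theta x I to the theta^i *)

Section Lift.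
Variable m : nat.
Variable t : Obj m.+1.
Local Notation p := (size t).

Lemma ins_mapE i s : ins_map t i s =
  @mkH m t (thi t i) (skipF s) (@skipF_mono s) (fun l j => dflt (oth t l) (oth (thi t i) j)).
Proof. by []. Qed.

Lemma uIE i : uI t i =
  @mkH m (globe m) (thi t i) (addn i) (@shift_mono i) (fun l j => dflt (oth (globe m) l) (oth (thi t i) j)).
Proof. by []. Qed.

Definition sigma i : Hom m.+1 (thi t i) t :=
  @mkH m (thi t i) t (sigF i) (@sigF_mono i) (fun l j => dflt (oth (thi t i) l) (oth t j)).
Definition tau i : Hom m.+1 (thi t i) (globe m) :=
  @mkH m (thi t i) (globe m) (tauF i) (@tauF_mono i) (fun l j => some_hom _ _).
Definition vertex i : Hom m.+1 (zero m.+1) t :=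
  @mkH m (zero m.+1) t (fun _ => i) (fun _ _ _ => leqnn i) (fun l j => some_hom _ _).

(* [fn (und f)] frozen beyond [size a], hence monotone on all of nat *)
Definition fn_trunc a b (f : Hom m.+1 a b) j := fn (und f) (minn j (size a)).

Lemma fn_trunc_mono a b (f : Hom m.+1 a b) j k : j <= k -> fn_trunc f j <= fn_trunc f k.
Proof. by move=> h; apply: fn_homo; lia. Qed.

Lemma fn_truncE a b (f : Hom m.+1 a b) j : j <= size a -> fn_trunc f j = fn (und f) j.
Proof. by move=> h; rewrite /fn_trunc; congr fn; lia. Qed.

Definition splits a (x : Hom m.+1 a t) (u : Hom m.+1 a (globe m)) i : Prop :=
  i <= p /\ forall j, j <= size a ->
    (fn (und u) j = 0 -> fn (und x) j <= i) /\ (0 < fn (und u) j -> i <= fn (und x) j).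

Definition lift_component a i (x : Hom m.+1 a t) (l j : nat) : Hom m (oth a l) (oth (thi t i) j) :=
  if j == i then some_hom _ _
  else compH (dflt (oth t (sigF i j)) (oth (thi t i) j)) (component x l (sigF i j)).

Lemma lift_und_mono a (x : Hom m.+1 a t) (u : Hom m.+1 a (globe m)) j k :
  j <= k -> fn_trunc x j + fn_trunc u j <= fn_trunc x k + fn_trunc u k.
Proof. by move=> h; apply: leq_add; apply: fn_trunc_mono. Qed.

Definition lift a i (x : Hom m.+1 a t) (u : Hom m.+1 a (globe m)) : Hom m.+1 a (thi t i) :=
  @mkH m a (thi t i) (fun j => fn_trunc x j + fn_trunc u j) (@lift_und_mono a x u) (lift_component i x).

Lemma fn_ins i s k : k <= p -> fn (und (ins_map t i s)) k = minn (skipF s k) p.+1.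
Proof. by move=> h; rewrite ins_mapE fn_mkH // size_thi. Qed.

Lemma component_ins i s l j : l < p -> j < p.+1 -> seg (und (ins_map t i s)) l j ->
  component (ins_map t i s) l j = dflt (oth t l) (oth (thi t i) j).
Proof. by move=> h1 h2 h3; rewrite ins_mapE component_mkH // size_thi. Qed.

Lemma fn_uI i k : i <= p -> k <= 1 -> fn (und (uI t i)) k = i + k.
Proof. by move=> hi hk; rewrite uIE fn_mkH // size_thi; lia. Qed.

Lemma fn_sigma i k : i <= p -> k <= p.+1 -> fn (und (sigma i)) k = sigF i k.
Proof. by move=> hi hk; rewrite /sigma fn_mkH ?size_thi //; case_lia. Qed.

Lemma component_sigma i l j : l < p.+1 -> j < p -> seg (und (sigma i)) l j ->
  component (sigma i) l j = dflt (oth (thi t i) l) (oth t j).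
Proof. by move=> h1 h2 h3; rewrite /sigma component_mkH // size_thi. Qed.

Lemma fn_tau i k : k <= p.+1 -> fn (und (tau i)) k = tauF i k.
Proof. by move=> hk; rewrite /tau fn_mkH ?size_thi //=; case_lia. Qed.

Lemma fn_vertex i k : i <= p -> fn (und (vertex i)) k = i.
Proof. by move=> hi; rewrite /vertex /fn /= /mkUnd inordK //; lia. Qed.

Lemma fn_to_zero a k : fn (und (some_hom a (zero m.+1))) k = 0.
Proof. by have := fn_leq (und (some_hom a (zero m.+1))) k; rewrite /=; lia. Qed.

Lemma fn_lift a i x u k : k <= size a -> fn (und (@lift a i x u)) k = fn (und x) k + fn (und u) k.
Proof.
move=> hk; rewrite /lift fn_mkH // size_thi !fn_truncE //.
by have := fn_leq (und x) k; have := fn_globe u k; lia.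
Qed.

Lemma component_lift a i x u l j : l < size a -> j < p.+1 -> seg (und (@lift a i x u)) l j ->
  component (@lift a i x u) l j = lift_component i x l j.
Proof. by move=> h1 h2 h3; rewrite /lift component_mkH // size_thi. Qed.

Lemma seg_lift a (x : Hom m.+1 a t) u i j l : splits x u i -> j < size a ->
  seg (und (lift i x u)) j l -> l != i -> seg (und x) j (sigF i l).
Proof.
move=> [hi hv] hj hs /eqP hl.
have [a1 a2] := hv j (ltnW hj); have [b1 b2] := hv j.+1 hj.
have := fn_globe u j; have := fn_globe u j.+1.
by move: hs; rewrite /seg !fn_lift // ?(ltnW hj) // => hs c1 c2; case_lia.
Qed.

Lemma lift_comp a b (h : Hom m.+1 b a) x u i : splits x u i ->
  compH (lift i x u) h = lift i (compH x h) (compH u h).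
Proof.
move=> hv.
have hfn k : k <= size b ->
    fn (und (compH (lift i x u) h)) k = fn (und (lift i (compH x h) (compH u h))) k.
  by move=> hk; rewrite fn_comp fn_lift ?fn_leq // fn_lift // !fn_comp.
apply: Hom_ext => // j l hj hl hs.
have hs' : seg (und (lift i (compH x h) (compH u h))) j l.
  by move: hs; rewrite /seg (hfn j (ltnW hj)) (hfn j.+1 hj).
have [j' h1 h2] := seg_compP hj hs.
have hj' := seg_ltn h1.
rewrite size_thi in hl.
rewrite (component_comp hj _ h1 h2) ?size_thi // !component_lift // /lift_component.
case: eqP => hli; first by apply: hom_into_zero; rewrite hli; exact: oth_thi_new (proj1 hv).
have hx := seg_lift hv hj' h2 (introN eqP hli).
by rewrite (component_comp hj (seg_ltn hx) h1 hx) compHA.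
Qed.

Lemma lift_ins a (x : Hom m.+1 a t) u i s : splits x u i -> i <= s <= i.+1 ->
  (forall k, k <= size a -> fn (und x) k + fn (und u) k = skipF s (fn (und x) k)) ->
  lift i x u = compH (ins_map t i s) x.
Proof.
move=> hv /andP[s1 s2] hk; have hi := proj1 hv.
apply: Hom_ext => [k hk'|j l hj hl hs].
  rewrite fn_lift // fn_comp fn_ins ?fn_leq // -hk //.
  by have := fn_leq (und x) k; have := fn_globe u k; lia.
rewrite size_thi in hl.
rewrite component_lift // /lift_component.
case: eqP => hli; first by apply: hom_into_zero; rewrite hli; exact: oth_thi_new.
have hx := seg_lift hv hj hs (introN eqP hli).
have hl' := seg_ltn hx.
have hsi : seg (und (ins_map t i s)) (sigF i l) l by rewrite /seg !fn_ins //; case_lia.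
by rewrite (component_comp hj _ hx hsi) ?size_thi // component_ins.
Qed.

Lemma lift_alpha a (x : Hom m.+1 a t) u i : splits x u i -> splits x u i.+1 ->
  lift i x u = compH (alpha t i) x.
Proof.
move=> h1 h2; apply: lift_ins => //; first by rewrite leqnn leqnSn.
move=> k hk; have [a1 a2] := (proj2 h1) k hk; have [b1 b2] := (proj2 h2) k hk.
by have := fn_globe u k; case_lia.
Qed.

Lemma lift_beta a (x : Hom m.+1 a t) u i : splits x u i -> splits x u i.+1 ->
  lift i.+1 x u = compH (beta t i.+1) x.
Proof.
move=> h1 h2; apply: lift_ins => //; first by rewrite leqnn leqnSn.
move=> k hk; have [a1 a2] := (proj2 h1) k hk; have [b1 b2] := (proj2 h2) k hk.
by have := fn_globe u k; case_lia.
Qed.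

Lemma sigma_alpha_beta i : i < p ->
  compH (sigma i) (alpha t i) = compH (sigma i.+1) (beta t i.+1).
Proof.
move=> hi.
have hfn1 k : k <= p -> fn (und (compH (sigma i) (alpha t i))) k = k.
  by move=> hk; rewrite fn_comp /alpha fn_ins // fn_sigma; case_lia.
have hfn2 k : k <= p -> fn (und (compH (sigma i.+1) (beta t i.+1))) k = k.
  by move=> hk; rewrite fn_comp /beta fn_ins // fn_sigma; case_lia.
apply: Hom_ext => [k hk|l j hl hj hs]; first by rewrite hfn1 // hfn2.
have ej : j = l by move: hs; rewrite /seg !hfn1 //; lia.
subst j.
pose l1 := if l < i then l else l.+1.
pose l2 := if l < i.+1 then l else l.+1.
have s1 : seg (und (alpha t i)) l l1 by rewrite /alpha /seg !fn_ins // /l1; case_lia.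
have s2 : seg (und (sigma i)) l1 l by rewrite /seg !fn_sigma // /l1; case_lia.
have s3 : seg (und (beta t i.+1)) l l2 by rewrite /beta /seg !fn_ins // /l2; case_lia.
have s4 : seg (und (sigma i.+1)) l2 l by rewrite /seg !fn_sigma // /l2; case_lia.
rewrite (component_comp hl hl s1 s2) (component_comp hl hl s3 s4).
rewrite /alpha /beta in s1 s3 *.
rewrite !component_ins ?component_sigma ?dflt_comp_inv //; try (rewrite /l1 /l2; case_lia).
- by rewrite oth_thi_old; [congr oth | | apply/eqP]; rewrite /l2; case_lia.
- by rewrite oth_thi_old; [congr oth | | apply/eqP]; rewrite /l1; case_lia.
Qed.

Lemma tau_alpha_beta i : i < p ->
  compH (tau i) (alpha t i) = compH (tau i.+1) (beta t i.+1).
Proof.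
move=> hi; apply: globe_hom_ext => k hk.
by rewrite !fn_comp /alpha /beta !fn_ins // !fn_tau; case_lia.
Qed.

Lemma sigma_uI i : i <= p ->
  compH (sigma i) (uI t i) = compH (vertex i) (some_hom (globe m) (zero m.+1)).
Proof.
move=> hi.
have hfn k : k <= 1 -> fn (und (compH (sigma i) (uI t i))) k = i.
  by move=> hk; rewrite fn_comp fn_uI // fn_sigma //; case_lia.
apply: Hom_ext => [k hk|l j hl hj hs]; first by rewrite hfn // fn_comp fn_vertex.
have l0 : l = 0 by move: hl => /=; lia.
by subst l; move: hs; rewrite /seg !hfn // => /andP[]; lia.
Qed.

Lemma tau_uI i : i <= p -> compH (tau i) (uI t i) = idH (globe m).
Proof.
move=> hi; apply: globe_hom_ext => k hk; rewrite /= in hk.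
by rewrite fn_comp fn_uI // fn_tau ?fn_id //; case_lia.
Qed.

Lemma tau_lift a (x : Hom m.+1 a t) u i : splits x u i -> compH (tau i) (lift i x u) = u.
Proof.
move=> [hi hv]; apply: globe_hom_ext => k hk.
have [a1 a2] := hv k hk; have c1 := fn_globe u k; have c2 := fn_leq (und x) k.
by rewrite fn_comp fn_lift // fn_tau; case_lia.
Qed.

Lemma sigma_lift a (x : Hom m.+1 a t) u i : splits x u i -> compH (sigma i) (lift i x u) = x.
Proof.
move=> hv; have [hi hv'] := hv.
have hfn k : k <= size a -> fn (und (compH (sigma i) (lift i x u))) k = fn (und x) k.
  move=> hk; have [a1 a2] := hv' k hk; have c1 := fn_globe u k; have c2 := fn_leq (und x) k.
  by rewrite fn_comp fn_lift // fn_sigma //; case_lia.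
apply: Hom_ext => // j l hj hl hs.
have hsx : seg (und x) j l by move: hs; rewrite /seg !hfn // ltnW.
have [a1 a2] := hv' j (ltnW hj); have [b1 b2] := hv' j.+1 hj.
have c1 := fn_globe u j; have c2 := fn_globe u j.+1.
pose l' := if l < i then l else l.+1.
have s1 : seg (und (lift i x u)) j l' by rewrite /seg !fn_lift ?(ltnW hj) // /l'; case_lia.
have s2 : seg (und (sigma i)) l' l by rewrite /seg !fn_sigma // /l'; case_lia.
have hl' : l' < p.+1 by rewrite /l'; case_lia.
have hne : l' != i by rewrite /l'; apply/eqP; case_lia.
rewrite (component_comp hj hl s1 s2) component_sigma // component_lift //.
rewrite /lift_component (negbTE hne).
have -> : sigF i l' = l by rewrite /l'; case_lia.
by apply: dflt_cancel; rewrite oth_thi_old //; congr oth; rewrite /l'; case_lia.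
Qed.

Lemma fn_thi a i (w : Hom m.+1 a (thi t i)) j : fn (und w) j <= p.+1.
Proof. by rewrite -(size_thi t i); exact: fn_leq. Qed.

Lemma splits_sigma a i (w : Hom m.+1 a (thi t i)) : i <= p ->
  splits (compH (sigma i) w) (compH (tau i) w) i.
Proof.
move=> hi; split => // j hj.
have hw := fn_thi w j.
by rewrite !fn_comp fn_sigma // fn_tau //; split; case_lia.
Qed.

Lemma lift_sigma a i (w : Hom m.+1 a (thi t i)) : i <= p ->
  lift i (compH (sigma i) w) (compH (tau i) w) = w.
Proof.
move=> hi.
have hfn k : k <= size a -> fn (und (lift i (compH (sigma i) w) (compH (tau i) w))) k = fn (und w) k.
  move=> hk; have hw := fn_thi w k.
  by rewrite fn_lift // !fn_comp fn_sigma // fn_tau //; case_lia.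
apply: Hom_ext => // j l hj hl hs.
rewrite size_thi in hl.
have hsw : seg (und w) j l by move: hs; rewrite /seg !hfn // ltnW.
rewrite component_lift // /lift_component.
case: eqP => hli; first by apply: hom_into_zero; rewrite hli; exact: oth_thi_new.
have s2 : seg (und (sigma i)) l (sigF i l) by rewrite /seg !fn_sigma //; case_lia.
have hl2 : sigF i l < p by case_lia.
rewrite (component_comp hj hl2 hsw s2) component_sigma //.
by apply: dflt_cancel; apply: oth_thi_old => //; exact/eqP.
Qed.

Lemma splits_incl a (v : Hom m.+1 (zero m.+1) t) (w : Hom m.+1 a (globe m)) :
  splits (incl0 v) w (fn (und v) 0).
Proof.
split; first by have := fn_leq (und v) 0.
by move=> j hj; rewrite /incl0 fn_comp fn_to_zero; lia.
Qed.

Lemma lift_incl a (v : Hom m.+1 (zero m.+1) t) (w : Hom m.+1 a (globe m)) :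
  lift (fn (und v) 0) (incl0 v) w = compH (uI t (fn (und v) 0)) w.
Proof.
have hi : fn (und v) 0 <= p by have := fn_leq (und v) 0.
have hfn k : k <= size a -> fn (und (lift (fn (und v) 0) (incl0 v) w)) k = fn (und v) 0 + fn (und w) k.
  by move=> hk; rewrite fn_lift // /incl0 fn_comp fn_to_zero.
apply: Hom_ext => [k hk|j l hj hl hs]; first by rewrite hfn // fn_comp fn_uI // fn_globe.
have e : l = fn (und v) 0.
  have c1 := fn_globe w j; have c2 := fn_globe w j.+1.
  by move: hs; rewrite /seg (hfn j (ltnW hj)) (hfn j.+1 hj) => /andP[]; lia.
by apply: hom_into_zero; rewrite e; exact: oth_thi_new.
Qed.

Lemma vertexE (v : Hom m.+1 (zero m.+1) t) : v = vertex (fn (und v) 0).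
Proof.
apply: Hom_ext => // k hk; have -> : k = 0 by move: hk => /=; lia.
by rewrite fn_vertex //; have := fn_leq (und v) 0.
Qed.

Definition split_index a (x : Hom m.+1 a t) (u : Hom m.+1 a (globe m)) : nat :=
  \max_(j < (size a).+1 | fn (und u) j == 0) fn (und x) j.

Lemma splits_index a (x : Hom m.+1 a t) (u : Hom m.+1 a (globe m)) : splits x u (split_index x u).
Proof.
split; first by apply/bigmax_leqP => j _; exact: fn_leq.
move=> j hj; split => hu.
  have := @leq_bigmax_cond _ (fun j : 'I_(size a).+1 => fn (und u) j == 0)
     (fun j : 'I_(size a).+1 => fn (und x) j) (Ordinal (hj : j < (size a).+1)).
  by rewrite /= hu eqxx => /(_ isT).
apply/bigmax_leqP => j' /eqP hj'.
have hlt : j' < j by case: (ltnP j' j) => // h; have := fn_homo u h (ltn_ord j'); lia.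
by apply: fn_homo => //; lia.
Qed.

Lemma splits_comp a b (h : Hom m.+1 b a) (x : Hom m.+1 a t) u i :
  splits x u i -> splits (compH x h) (compH u h) i.
Proof. by move=> [hi hv]; split => // j hj; rewrite !fn_comp; apply: hv; exact: fn_leq. Qed.

Lemma splits_between a (x : Hom m.+1 a t) u i k l :
  splits x u i -> splits x u k -> i <= l <= k -> splits x u l.
Proof.
move=> [hi hv] [hk hv'] /andP[h1 h2]; split; first lia.
by move=> j hj; have [a1 a2] := hv j hj; have [b1 b2] := hv' j hj; split; lia.
Qed.

End Lift.

(** * Maps out of pushouts and zigzag colimits *)

Lemma natural_comp n (A B C : PSh n) (f : PMap A B) (g : PMap B C) :
  natural f -> natural g -> natural (fun a x => g a (f a x)).
Proof. by move=> hf hg a b h x; rewrite hf hg. Qed.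

Lemma pushout_ext n (A B C P Z : PSh n) (u : PMap A B) (v : PMap A C)
    (i1 : PMap B P) (i2 : PMap C P) (h h' : PMap P Z) :
  is_pushout u v i1 i2 -> lawful Z -> natural h -> natural h' ->
  (forall a x, h a (i1 a x) = h' a (i1 a x)) -> (forall a x, h a (i2 a x) = h' a (i2 a x)) ->
  forall a x, h a x = h' a x.
Proof.
move=> [_ [n1 [n2 [sq UP]]]] lawZ nh nh' e1 e2.
have [h0 [_ [_ [_ uniq]]]] := UP Z _ _ lawZ (natural_comp n1 nh) (natural_comp n2 nh)
  (fun a x => congr1 (h a) (sq a x)).
by move=> a x; rewrite (uniq h nh) // (uniq h' nh') // => b y; rewrite (e1, e2).
Qed.

Lemma zigzag_colim_ext n p (X Q Z : PSh n) (P : nat -> PSh n)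
    (l : forall i, PMap X (P i)) (r : forall i, PMap X (P i.+1))
    (c : forall i, PMap (P i) Q) (h h' : PMap Q Z) :
  is_zigzag_colim p l r c -> lawful Z -> natural h -> natural h' ->
  (forall i, i <= p -> forall a x, h a (c i a x) = h' a (c i a x)) ->
  forall a x, h a x = h' a x.
Proof.
move=> [_ [nc [compat UP]]] lawZ nh nh' e.
have nhc i : i <= p -> natural (fun a x => h a (c i a x)).
  by move=> hi; apply: natural_comp => //; exact: nc.
have [h0 [_ [_ uniq]]] := UP Z _ lawZ nhc (fun i hi a x => congr1 (h a) (compat i hi a x)).
by move=> a x; rewrite (uniq h nh) // (uniq h' nh') // => i hi b y; rewrite e.
Qed.

(** * The comparison maps *)

Section Comparison.
Variables (m : nat) (t : Obj m.+1).
Local Notation p := (size t).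
Variables (PJ : PSh m.+1) (j1 : PMap (prodP (Yon t) (Yon (globe m))) PJ)
  (j2 : PMap (prodP (constP t) (JP m)) PJ).
Arguments j1 : clear implicits.
Arguments j2 : clear implicits.
Hypothesis HJ : is_pushout (span_u t) (span_v t) j1 j2.
Variables (P : nat -> PSh m.+1) (phi : forall i, PMap (Yon (thi t i)) (P i))
  (psi : forall i, PMap (JP m) (P i)).
Arguments phi : clear implicits.
Arguments psi : clear implicits.
Hypothesis HP : forall i, i <= p -> is_pushout (Ymap (uI t i)) (iJ m) (phi i) (psi i).
Variables (Q : PSh m.+1) (c : forall i, PMap (P i) Q).
Arguments c : clear implicits.
Hypothesis HQ : @is_zigzag_colim m.+1 p (Yon t) P
  (fun i a (x : Hom m.+1 a t) => phi i a (compH (alpha t i) x))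
  (fun i a (x : Hom m.+1 a t) => phi i.+1 a (compH (beta t i.+1) x)) Q c.

Lemma lift_index_indep a (x : Hom m.+1 a t) u i k : splits x u i -> splits x u k ->
  c i a (phi i a (lift i x u)) = c k a (phi k a (lift k x u)).
Proof.
have [_ [_ [compat _]]] := HQ.
have step d j : splits x u j -> splits x u (j + d) ->
    c j a (phi j a (lift j x u)) = c (j + d) a (phi (j + d) a (lift (j + d) x u)).
  elim: d j => [|d IH] j hj hjd; first by rewrite addn0.
  have hj1 : splits x u j.+1 by apply: (splits_between hj hjd); lia.
  have hp : j < p by have := proj1 hjd; lia.
  by rewrite (lift_alpha hj hj1) compat // -(lift_beta hj hj1) (IH j.+1 hj1) ?addSnnS.
move=> hi hk; case: (leqP i k) => hik.
  by move: hk; rewrite -(subnKC hik); exact: step.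
by move: hi; rewrite -(subnKC (ltnW hik)) => hi; symmetry; exact: step.
Qed.

Definition eta_cyl : PMap (prodP (Yon t) (Yon (globe m))) Q := fun a xu =>
  let i := split_index xu.1 xu.2 in c i a (phi i a (lift i xu.1 xu.2)).

Definition eta_vert : PMap (prodP (constP t) (JP m)) Q := fun a vo =>
  let i := fn (und vo.1) 0 in c i a (psi i a vo.2).
Arguments eta_cyl : clear implicits.
Arguments eta_vert : clear implicits.

Lemma eta_cylE a (x : Hom m.+1 a t) u i : splits x u i ->
  eta_cyl a (x, u) = c i a (phi i a (lift i x u)).
Proof. by move=> hi; apply: lift_index_indep => //; exact: splits_index. Qed.

Lemma eta_cyl_natural : natural eta_cyl.
Proof.
have [_ [natc _]] := HQ.
move=> a b f [x u] /=; have hv := splits_index x u; have hp := proj1 hv.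
rewrite (eta_cylE (splits_comp f hv)) -(lift_comp f hv).
by have [_ [-> _]] := HP hp; rewrite natc.
Qed.

Lemma eta_vert_natural : natural eta_vert.
Proof.
have [_ [natc _]] := HQ.
move=> a b f [v o] /=; have hp : fn (und v) 0 <= p := fn_leq _ _.
by rewrite /eta_vert /=; have [_ [_ [-> _]]] := HP hp; rewrite natc.
Qed.

Lemma eta_glue a x : eta_cyl a (span_u t a x) = eta_vert a (span_v t a x).
Proof.
case: x => v w; have hp : fn (und v) 0 <= p := fn_leq _ _.
rewrite /span_u /span_v (eta_cylE (splits_incl v w)) lift_incl /eta_vert /=.
by have [_ [_ [_ [-> _]]]] := HP hp.
Qed.

Lemma eta_exists : exists eta : PMap PJ Q, natural eta /\
  (forall a x u i, splits x u i -> eta a (j1 a (x, u)) = c i a (phi i a (lift i x u))) /\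
  (forall a v o, eta a (j2 a (v, o)) = c (fn (und v) 0) a (psi (fn (und v) 0) a o)).
Proof.
have [_ [_ [_ [_ UP]]]] := HJ; have [lawQ _] := HQ.
have [eta [neta [eta1 [eta2 _]]]] :=
  UP Q _ _ lawQ eta_cyl_natural eta_vert_natural eta_glue.
by exists eta; split; [|split] => // a x u i hi; rewrite eta1 (eta_cylE hi).
Qed.

Definition eps_piece_spec i (h : PMap (P i) PJ) : Prop :=
  natural h /\
  (forall a y, h a (phi i a y) = j1 a (compH (sigma t i) y, compH (tau t i) y)) /\
  (forall a o, h a (psi i a o) = j2 a (vertex t i, o)).
Arguments eps_piece_spec : clear implicits.

Lemma eps_piece_exists i : exists h : PMap (P i) PJ, i <= p -> eps_piece_spec i h.
Proof.
have [_ [nj1 [nj2 [sqJ _]]]] := HJ.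
case: (leqP i p) => hi; last by exists (fun a _ => j1 a (some_hom a t, some_hom a (globe m))); lia.
have [_ [_ [_ [_ UP]]]] := HP hi; have [lawPJ _] := HJ.
have nat1 : natural (fun a (y : ob (Yon (thi t i)) a) => j1 a (compH (sigma t i) y, compH (tau t i) y)).
  by move=> a b f y; rewrite -nj1; congr (j1 a (_, _)); exact: compHA.
have nat2 : natural (fun a (o : ob (JP m) a) => j2 a (vertex t i, o)) by move=> a b f o; rewrite -nj2.
have glue a w : j1 a (compH (sigma t i) (Ymap (uI t i) a w), compH (tau t i) (Ymap (uI t i) a w)) =
                j2 a (vertex t i, iJ m a w).
  rewrite /Ymap !compHA sigma_uI // tau_uI // compH_idl -compHA.
  by rewrite (hom_into_zero erefl (compH _ w) (some_hom a _)); exact: (sqJ a (vertex t i, w)).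
have [h [nh [h1 [h2 _]]]] := UP PJ _ _ lawPJ nat1 nat2 glue.
by exists h.
Qed.

Lemma eps_exists : exists eps : PMap Q PJ, natural eps /\
  (forall i, i <= p -> forall a y, eps a (c i a (phi i a y)) = j1 a (compH (sigma t i) y, compH (tau t i) y)) /\
  (forall i, i <= p -> forall a o, eps a (c i a (psi i a o)) = j2 a (vertex t i, o)).
Proof.
have [z hz] : exists z : forall i, PMap (P i) PJ, forall i, i <= p -> eps_piece_spec i (z i).
  exists (fun i => proj1_sig (constructive_indefinite_description _ (eps_piece_exists i))).
  by move=> i; exact: (proj2_sig (constructive_indefinite_description _ (eps_piece_exists i))).
have [_ [_ [_ UP]]] := HQ; have [lawPJ _] := HJ.
have compat i : i < p -> forall a x, z i a (phi i a (compH (alpha t i) x)) =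
                                     z i.+1 a (phi i.+1 a (compH (beta t i.+1) x)).
  move=> hi a x; have [_ [-> _]] := hz i (ltnW hi); have [_ [-> _]] := hz i.+1 hi.
  by rewrite !compHA sigma_alpha_beta // tau_alpha_beta.
have [eps [neps [epsc _]]] := UP PJ z lawPJ (fun i hi => proj1 (hz i hi)) compat.
exists eps; split => //; split => i hi a y; rewrite epsc //; have [_ [h1 h2]] := hz i hi.
- exact: h1.
- exact: h2.
Qed.

End Comparison.

Theorem proposition3p13 (m : nat) (t : Obj m.+1)
  (PJ : PSh m.+1)
  (j1 : PMap (prodP (Yon t) (Yon (globe m))) PJ)
  (j2 : PMap (prodP (constP t) (JP m)) PJ)
  (HJ : is_pushout (span_u t) (span_v t) j1 j2)
  (P : nat -> PSh m.+1)
  (phi : forall i, PMap (Yon (thi t i)) (P i))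
  (psi : forall i, PMap (JP m) (P i))
  (HP : forall i, i <= size t -> is_pushout (Ymap (uI t i)) (iJ m) (phi i) (psi i))
  (Q : PSh m.+1) (c : forall i, PMap (P i) Q)
  (HQ : @is_zigzag_colim m.+1 (size t) (Yon t) P
          (fun i a (x : Hom m.+1 a t) => phi i a (compH (alpha t i) x))
          (fun i a (x : Hom m.+1 a t) => phi i.+1 a (compH (beta t i.+1) x)) Q c) :
  exists (eta : PMap PJ Q) (eps : PMap Q PJ),
    natural eta /\ natural eps /\
    (forall a x, eps a (eta a x) = x) /\ (forall a y, eta a (eps a y) = y).
Proof.
have [eta [neta [eta1 eta2]]] := eta_exists HJ HP HQ.
have [eps [neps [eps1 eps2]]] := eps_exists HJ HP HQ.
have [lawPJ _] := HJ; have [lawQ [natc _]] := HQ.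
exists eta, eps; do 2 split => //; split.
- apply: (pushout_ext (h' := fun a x => x) HJ lawPJ (natural_comp neta neps))
    => [//|a [x u] /=|a [v o] /=].
  + have hs := splits_index x u.
    by rewrite (eta1 _ _ _ _ hs) eps1 ?sigma_lift ?tau_lift //; case: hs.
  + have hv : fn (und v) 0 <= size t := fn_leq _ _.
    by rewrite eta2 eps2 // -vertexE.
- apply: (zigzag_colim_ext (h' := fun a y => y) HQ lawQ (natural_comp neps neta))
    => // i hi.
  apply: (pushout_ext (HP i hi) lawQ (natural_comp (natc i hi) (natural_comp neps neta)) (natc i hi)).
  + by move=> a y /=; rewrite eps1 // (eta1 _ _ _ _ (splits_sigma y hi)) lift_sigma.
  + by move=> a o /=; rewrite eps2 // eta2 fn_vertex.
Qed.
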